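(* Let $M$ be a triangulated ideal 3-manifold with $\partial M=\varnothing$ and topological ideal triangulation $\mathcal D$. There is a branched covering $M^{\prime}$ of $M$ and a topological ideal triangulation $\mathcal{D}^{\prime}$ of $M^{\prime}$ such that $i_{\mathcal{D}^{\prime}}(e^{\prime})\geq6$ for each edge $e^{\prime}$ of $\mathcal{D}^{\prime}$.
   Context: A topological ideal tetrahedron is a space homeomorphic to a 3-simplex with its vertices removed. A triangulated ideal 3-manifold is a non-compact orientable 3-manifold obtained from a finite disjoint union of topological ideal tetrahedra by gluing faces of distinct tetrahedra pairwise via homeomorphisms, every face being glued; the tetrahedra with their faces and edges form its topological ideal triangulation. The index $i_{\mathcal D}(e)$ of an edge $e$ of a triangulation $\mathcal D$ is the integer $k\ge2$ such that every point of $e$ has a closed neighbourhood in the 2-skeleton of $\mathcal D$ homeomorphic to $k$ closed half-discs glued along their diameter. *)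

From mathcomp Require Import all_boot all_fingroup.
Set Implicit Arguments. Unset Strict Implicit. Unset Printing Implicit Defensive.

(* Each tetrahedron has
   vertices 'I_4; face f of t is the face opposite vertex f.
   [partner t f] is the face (u, g) glued to face f of t, and
   [gmap t f] is the vertex bijection from t to u realizing the gluing
   (it sends the face opposite f onto the face opposite g). *)
Record gluing (T : finType) := Gluing {
  partner : T -> 'I_4 -> T * 'I_4;
  gmap : T -> 'I_4 -> {perm 'I_4}
}.

Section Gluing.
Variables (T : finType) (G : gluing T).

Definition gluing_ok : Prop :=
  forall t f,
    [/\ (partner G t f).1 != t,
        partner G (partner G t f).1 (partner G t f).2 = (t, f),
        gmap G t f f = (partner G t f).2 &
        forall x, gmap G (partner G t f).1 (partner G t f).2 (gmap G t f x) = x].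

(* orientability: tetrahedra can be oriented so that all gluings are
   orientation-reversing, i.e. the gluing permutation is odd exactly when
   the two tetrahedra carry the same orientation flag *)
Definition orientable_gluing : Prop :=
  exists o : T -> bool, forall t f,
    odd_perm (gmap G t f) = (o t == o (partner G t f).1).

(* oriented edges (t, a, b), a != b; one elementary identification step
   across a glued face containing the edge *)
Definition edge_step : rel (T * 'I_4 * 'I_4) :=
  fun x y => let: (t, a, b) := x in let: (u, c, d) := y in
    [exists f : 'I_4, [&& f != a, f != b, (partner G t f).1 == u,
                          gmap G t f a == c & gmap G t f b == d]].

(* no edge is identified with itself with reversed orientation
   (this is exactly what makes the quotient a 3-manifold) *)
Definition no_reversed_edge : Prop :=
  forall t a b, a != b -> ~~ connect edge_step (t, a, b) (t, b, a).

Definition triangulated_ideal_3manifold : Prop :=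
  [/\ gluing_ok, orientable_gluing & no_reversed_edge].

(* the index of the edge of the triangulation containing the edge {a,b} of
   tetrahedron t: the number of tetrahedron-edges (u,{c,d}) identified to it *)
Definition edge_index (t : T) (a b : 'I_4) : nat :=
  #|[set y : T * 'I_4 * 'I_4 |
      let: (u, c, d) := y in
      (c < d) && (connect edge_step (t, a, b) y || connect edge_step (t, b, a) y)]|.

End Gluing.

(* A (simplicial) branched covering of the triangulated manifold given by G
   by the one given by G': a surjection of tetrahedra compatible with all
   face gluings; topologically it is a branched covering branched along edges. *)
Definition simplicial_branched_cover (T' T : finType)
    (G' : gluing T') (G : gluing T) (p : T' -> T) : Prop :=
  (forall t : T, exists t' : T', p t' = t) /\
  forall t' f,
    partner G (p t') f = (p (partner G' t' f).1, (partner G' t' f).2) /\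
    gmap G (p t') f = gmap G' t' f.

From mathcomp Require Import all_boot all_fingroup all_algebra zify.
Set Implicit Arguments. Unset Strict Implicit. Unset Printing Implicit Defensive.
Import GRing.Theory.

(* A sheet of the cover labels every oriented edge of every tetrahedron of D
   by an element of Z/6.  Passing through a face F, the labels of the three
   edges of F are carried over to the glued tetrahedron and shifted by +1 or
   -1 according to whether the passage turns positively or negatively around
   that edge for a fixed orientation of D; the rule is symmetric in the two
   sides of F, so the lifted gluings are again involutive.  Turning around an
   edge of the cover always in the positive direction raises the label of the
   current edge by 1 at each step, so six consecutive turns visit six distinct
   oriented tetrahedron-edges, and since no edge is identified with its
   reverse they are six distinct edges of the same edge class. *)

Definition i0 : 'I_4 := @Ordinal 4 0 isT.
Definition i1 : 'I_4 := @Ordinal 4 1 isT.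
Definition i2 : 'I_4 := @Ordinal 4 2 isT.
Definition i3 : 'I_4 := @Ordinal 4 3 isT.

Lemma ord4_avoid3 (a b c : 'I_4) : exists d : 'I_4, d \notin [:: a; b; c].
Proof.
apply/existsP; apply: contraT => /existsPn avoid.
move: (avoid i0) (avoid i1) (avoid i2) (avoid i3); clear avoid.
by move: a b c => [a ?] [b ?] [c ?]; rewrite !inE -!val_eqE /=; lia.
Qed.

Lemma ord4_avoid3_unique (a b c d d' : 'I_4) : uniq [:: a; b; c] ->
  d \notin [:: a; b; c] -> d' \notin [:: a; b; c] -> d = d'.
Proof.
move: a b c d d' => [a ?] [b ?] [c ?] [d ?] [d' ?]; rewrite /= !inE -!val_eqE /= => *.
apply/val_inj => /=; lia.
Qed.

Lemma perm_ord4_eq (s1 s2 : {perm 'I_4}) :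
  s1 i0 = s2 i0 -> s1 i1 = s2 i1 -> s1 i2 = s2 i2 -> s1 = s2.
Proof.
move=> E0 E1 E2.
have uniq_s1 : uniq [:: s1 i0; s1 i1; s1 i2] by rewrite /= !inE !(inj_eq perm_inj).
have E3 : s1 i3 = s2 i3.
  apply: (ord4_avoid3_unique uniq_s1); first by rewrite !inE !(inj_eq perm_inj).
  by rewrite E0 E1 E2 !inE !(inj_eq perm_inj).
apply/(permP s1 s2) => -[[|[|[|[|i]]]] lt_i4] //.
- by rewrite (_ : Ordinal _ = i0) //; apply: val_inj.
- by rewrite (_ : Ordinal _ = i1) //; apply: val_inj.
- by rewrite (_ : Ordinal _ = i2) //; apply: val_inj.
- by rewrite (_ : Ordinal _ = i3) //; apply: val_inj.
Qed.

(* Junk value [1] unless [a], [b], [c] are distinct. *)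
Definition frame (a b c : 'I_4) : {perm 'I_4} :=
  odflt 1%g [pick s : {perm 'I_4} | [&& s i0 == a, s i1 == b & s i2 == c]].

Lemma frameP (a b c : 'I_4) : uniq [:: a; b; c] ->
  [/\ frame a b c i0 = a, frame a b c i1 = b & frame a b c i2 = c].
Proof.
move=> abc; rewrite /frame; case: pickP => [s /and3P[/eqP-> /eqP-> /eqP->] //|none].
have [d d_new] := ord4_avoid3 a b c.
pose g (i : 'I_4) := nth d [:: a; b; c] i.
have g_inj : injective g.
  have: uniq [:: a; b; c; d].
    by rewrite -[[:: a; b; c; d]]/(rcons [:: a; b; c] d) rcons_uniq d_new.
  move=> /= abcd [[|[|[|[|i]]]] ?] // [[|[|[|[|j]]]] ?] // gij; apply/val_inj => //=;
  by move: abcd; rewrite /g /= in gij; rewrite gij !inE eqxx /= ?orbT ?andbF.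
by have := none (perm g_inj); rewrite !permE /g /= !eqxx.
Qed.

Definition orient (a b c : 'I_4) : bool := odd_perm (frame a b c).

Lemma orient_perm (s : {perm 'I_4}) (a b c : 'I_4) : uniq [:: a; b; c] ->
  orient (s a) (s b) (s c) = odd_perm s (+) orient a b c.
Proof.
move=> abc; have [A0 A1 A2] := frameP abc.
have sabc : uniq (map s [:: a; b; c]) by rewrite (map_inj_uniq perm_inj).
have [B0 B1 B2] := frameP sabc.
rewrite /orient (@perm_ord4_eq (frame (s a) (s b) (s c)) (frame a b c * s)).
  by rewrite odd_permM addbC.
all: by rewrite permM ?A0 ?A1 ?A2 ?B0 ?B1 ?B2.
Qed.

Lemma orient_swap (a b c d : 'I_4) : uniq [:: a; b; c; d] ->
  orient a b d = ~~ orient a b c.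
Proof.
move=> /= /and4P[]; rewrite !inE !negb_or => /and3P[ab ac ad] /andP[bc bd] cd _.
have abc : uniq [:: a; b; c] by rewrite /= !inE negb_or ab ac bc.
have := orient_perm (tperm c d) abc.
by rewrite tpermL odd_tperm cd !tpermD // 1?eq_sym.
Qed.

Definition pos_face (s : bool) (a b : 'I_4) : 'I_4 :=
  odflt a [pick c | [&& c != a, c != b & s (+) orient a b c]].

Lemma pos_faceP (s : bool) (a b : 'I_4) : a != b ->
  [&& pos_face s a b != a, pos_face s a b != b & s (+) orient a b (pos_face s a b)].
Proof.
move=> ab; rewrite /pos_face; case: pickP => //= none.
have [c] := ord4_avoid3 a b b; rewrite !inE orbb negb_or => /andP[ca cb].
have [d] := ord4_avoid3 a b c; rewrite !inE !negb_or => /and3P[da db dc].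
have abcd : uniq [:: a; b; c; d].
  by rewrite /= !inE !negb_or ab (eq_sym a c) ca (eq_sym a d) da (eq_sym b c) cb
    (eq_sym b d) db (eq_sym c d) dc.
by move: (none c) (none d); rewrite ca cb da db (orient_swap abcd) /= addbN => ->.
Qed.

Lemma homo_connect (A B : finType) (e : rel A) (e' : rel B) (h : A -> B) :
  {homo h : x y / e x y >-> e' x y} ->
  {homo h : x y / connect e x y >-> connect e' x y}.
Proof.
move=> h_homo x _ /connectP[p e_p ->]; apply/connectP.
by exists (map h p); [exact: homo_path e_p | rewrite last_map].
Qed.

Notation oedge T := (T * 'I_4 * 'I_4)%type.

Definition edge_rev (T : Type) (y : oedge T) : oedge T := (y.1.1, y.2, y.1.2).

Lemma edge_revK (T : Type) : involutive (@edge_rev T).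
Proof. by case=> [[]]. Qed.

Section EdgeStep.
Variables (T : finType) (G : gluing T).

Lemma edge_step_rev : {homo @edge_rev T : x y / edge_step G x y}.
Proof.
move=> [[t a] b] [[u c] d] /= /existsP[f /and5P[fa fb tu ac bd]].
by apply/existsP; exists f; rewrite fa fb tu ac bd.
Qed.

Lemma edge_step_closed : closed (edge_step G) [pred y : oedge T | y.1.2 != y.2].
Proof.
move=> [[t a] b] [[u c] d] /= /existsP[f /and5P[_ _ _ /eqP<- /eqP<-]].
by rewrite !inE /= (inj_eq perm_inj).
Qed.

Hypothesis G_ok : gluing_ok G.

Lemma edge_step_sym : symmetric (edge_step G).
Proof.
suff step_sym x y : edge_step G x y -> edge_step G y x.
  by move=> x y; apply/idP/idP; apply: step_sym.
move: x y => [[t a] b] [[u c] d] /= /existsP[f /and5P[fa fb /eqP<- /eqP<- /eqP<-]].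
have [_ mateK mate_f gK] := G_ok t f.
apply/existsP; exists (partner G t f).2.
by rewrite mateK !gK !eqxx -mate_f !(inj_eq perm_inj) fa fb.
Qed.

Lemma edge_class_card_le_index t a b : no_reversed_edge G -> a != b ->
  #|[set y | connect (edge_step G) (t, a, b) y]| <= edge_index G t a b.
Proof.
move=> G_nr ab; set C := [set y | _].
have sym_step : connect_sym (edge_step G) := sym_connect_sym edge_step_sym.
have C_neq y : y \in C -> y.1.2 != y.2.
  by rewrite inE => /(closed_connect edge_step_closed); rewrite !inE => <-.
have C_rev y : y \in C -> edge_rev y \notin C.
  rewrite !inE => ty; apply: contraNN (G_nr t a b ab) => t_ry.
  have /(homo_connect edge_step_rev) := ty; rewrite sym_step => ry_bat.
  exact: connect_trans t_ry ry_bat.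
pose key (y : oedge T) := if y.1.2 < y.2 then y else edge_rev y.
have key_inj : {in C &, injective key}.
  move=> y z yC zC; rewrite /key.
  case: ifP => _; case: ifP => _ yz //.
  - by move: (C_rev z zC); rewrite -yz yC.
  - by move: (C_rev y yC); rewrite yz zC.
  - by rewrite -[y]edge_revK yz edge_revK.
rewrite -(card_in_imset key_inj); apply/subset_leq_card/subsetP => _ /imsetP[y yC ->].
move: (C_neq y yC) (yC); rewrite /key !inE; case: y yC => [[u c] d] /= yC cd ty.
case: ltngtP cd => [cd _ | dc _ | /val_inj-> /negP //] /=; first by rewrite cd ty.
by rewrite dc (homo_connect edge_step_rev ty) orbT.
Qed.

End EdgeStep.

Section CounterCover.
Variables (n : nat) (T : finType) (D : gluing T) (o : T -> bool).
Local Open Scope ring_scope.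

Definition sheet := {ffun oedge T -> 'Z_n}.

Definition mate (F : T * 'I_4) : T * 'I_4 := partner D F.1 F.2.

Definition on_face (F : T * 'I_4) (y : oedge T) : bool :=
  [&& y.1.1 == F.1, y.1.2 != F.2, y.2 != F.2 & y.1.2 != y.2].

Definition across (F : T * 'I_4) (y : oedge T) : oedge T :=
  ((mate F).1, gmap D F.1 F.2 y.1.2, gmap D F.1 F.2 y.2).

Definition turn_sign (F : T * 'I_4) (y : oedge T) : 'Z_n :=
  if o F.1 (+) orient y.1.2 y.2 F.2 then 1 else -1.

Definition cross (F : T * 'I_4) (x : sheet) : sheet :=
  [ffun y => if on_face F y then x (across F y) - turn_sign F y
             else if on_face (mate F) y then x (across (mate F) y) - turn_sign (mate F) y
             else x y].

Definition counter_cover : gluing (T * sheet)%type :=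
  Gluing (fun tx f => (((partner D tx.1 f).1, cross (tx.1, f) tx.2), (partner D tx.1 f).2))
         (fun tx f => gmap D tx.1 f).

Definition edge_proj (X : oedge (T * sheet)%type) : oedge T := (X.1.1.1, X.1.2, X.2).

Definition counter (X : oedge (T * sheet)%type) : 'Z_n := X.1.1.2 (edge_proj X).

Hypothesis D_ok : gluing_ok D.
Hypothesis D_or : forall t f, odd_perm (gmap D t f) = (o t == o (partner D t f).1).

Lemma mateK : involutive mate.
Proof. by case=> t f; have [_ ? _ _] := D_ok t f. Qed.

Lemma mate_neq F : (mate F).1 != F.1.
Proof. by case: F => t f; have [? _ _ _] := D_ok t f. Qed.

Lemma gmap_mate F c : gmap D (mate F).1 (mate F).2 (gmap D F.1 F.2 c) = c.
Proof. by case: F => t f; have [_ _ _ ->] := D_ok t f. Qed.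

Lemma gmap_face F : gmap D F.1 F.2 F.2 = (mate F).2.
Proof. by case: F => t f; have [_ _ -> _] := D_ok t f. Qed.

Lemma on_face_across F y : on_face F y -> on_face (mate F) (across F y).
Proof.
by case/and4P=> _ cF dF cd; rewrite /on_face /= eqxx -gmap_face !(inj_eq perm_inj) cF dF cd.
Qed.

Lemma acrossK F y : on_face F y -> across (mate F) (across F y) = y.
Proof.
case: y => [[t c] d] /and4P[/= /eqP-> _ _ _].
by rewrite /across /= !gmap_mate mateK; case: F.
Qed.

Lemma on_face_mate F y : on_face F y -> ~~ on_face (mate F) y.
Proof. by case/andP=> /eqP yF _; rewrite /on_face yF eq_sym (negbTE (mate_neq F)). Qed.

Lemma turn_sign_across F y : on_face F y -> turn_sign (mate F) (across F y) = - turn_sign F y.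
Proof.
case: F => t f; case: y => [[u c] d] /and4P[_ /= cf df cd].
have cdf : uniq [:: c; d; f] by rewrite /= !inE negb_or cd cf df.
rewrite /turn_sign /= -(gmap_face (t, f)) orient_perm // D_or.
by case: (o t); case: (o _); case: (orient c d f); rewrite /= ?opprK.
Qed.

Lemma cross_across F x y : on_face F y -> cross F x (across F y) = x y + turn_sign F y.
Proof.
move=> Fy; have Fy' := on_face_across Fy; have := on_face_mate Fy'.
by rewrite ffunE mateK => /negbTE->; rewrite Fy' acrossK // turn_sign_across // opprK.
Qed.

Lemma cross_mate F : cross (mate F) =1 cross F.
Proof.
move=> x; apply/ffunP => y; rewrite !ffunE mateK.
by case: (boolP (on_face F y)) => // /on_face_mate /negbTE ->.
Qed.

Lemma crossK F : involutive (cross F).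
Proof.
suff crossK_on G x y : on_face G y -> cross G (cross G x) y = x y.
  move=> x; apply/ffunP => y; case: (boolP (on_face F y)) => [|nFy]; first exact: crossK_on.
  case: (boolP (on_face (mate F) y)) => [|nFy'].
    by rewrite -!(cross_mate F); apply: crossK_on.
  by rewrite !ffunE (negbTE nFy) (negbTE nFy').
by move=> Gy; rewrite ffunE Gy cross_across // addrK.
Qed.

Lemma counter_cover_ok : gluing_ok counter_cover.
Proof.
move=> [t x] f; have [tf mate_tf gmap_f gK] := D_ok t f; split => //=.
- by rewrite xpair_eqE negb_and tf.
- by rewrite mate_tf -(surjective_pairing (partner D t f)) (cross_mate (t, f)) crossK.
Qed.

Lemma counter_cover_orientable : orientable_gluing counter_cover.
Proof. by exists (fun tx => o tx.1) => -[t x] f; apply: D_or. Qed.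

Lemma edge_step_proj :
  {homo edge_proj : X Y / edge_step counter_cover X Y >-> edge_step D X Y}.
Proof.
move=> [[[t x] a] b] [[[u y] c] d] /= /existsP[f /and5P[fa fb /eqP[<- _] ac bd]].
by apply/existsP; exists f; rewrite fa fb ac bd eqxx.
Qed.

Lemma counter_cover_no_reversed_edge :
  no_reversed_edge D -> no_reversed_edge counter_cover.
Proof.
move=> D_nr tx a b ab; apply: contraNN (D_nr tx.1 a b ab).
exact: (homo_connect edge_step_proj).
Qed.

Lemma counter_cover_branched : simplicial_branched_cover counter_cover D fst.
Proof.
split=> [t | [t x] f]; first by exists (t, [ffun=> 0]).
by rewrite /= -surjective_pairing.
Qed.

Definition turn (X : oedge (T * sheet)%type) : oedge (T * sheet)%type :=
  let F := (X.1.1.1, pos_face (o X.1.1.1) X.1.2 X.2) in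
  (((mate F).1, cross F X.1.1.2), gmap D F.1 F.2 X.1.2, gmap D F.1 F.2 X.2).

Lemma turnP X : X.1.2 != X.2 ->
  edge_step counter_cover X (turn X) /\ counter (turn X) = counter X + 1.
Proof.
case: X => [[[t x] a] b] /= ab; have /and3P[fa fb pos] := pos_faceP (o t) ab.
set f := pos_face _ a b in fa fb pos *; split.
  by apply/existsP; exists f; rewrite fa fb !eqxx.
have Fy : on_face (t, f) (t, a, b).
  by rewrite /on_face /= eqxx ab (eq_sym a) (eq_sym b) fa fb.
by rewrite /counter /edge_proj /= (cross_across x Fy) /turn_sign /= pos.
Qed.

Lemma counter_cover_edge_index (t' : T * sheet) (a b : 'I_4) : (1 < n)%N ->
  no_reversed_edge D -> a != b -> (n <= edge_index counter_cover t' a b)%N.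
Proof.
move=> n_gt1 D_nr ab; pose X0 := (t', a, b).
have orbit i : connect (edge_step counter_cover) X0 (iter i turn X0) /\
               counter (iter i turn X0) = counter X0 + i%:R.
  elim: i => [|i [X0i ci]]; first by rewrite connect0 addr0.
  have := closed_connect (@edge_step_closed _ counter_cover) X0i.
  rewrite !inE /= ab => /esym neq.
  have [step c_step] := turnP neq.
  by rewrite (connect_trans X0i (connect1 step)) /= c_step ci -addrA natr1.
have orbit_inj : injective (fun i : 'I_n => iter i turn X0).
  move=> i j /(congr1 counter); rewrite (orbit i).2 (orbit j).2 => /addrI /(congr1 val).
  by rewrite /= !val_Zp_nat // !modn_small // => /val_inj.
have card_orbit : #|[set iter i turn X0 | i : 'I_n]| = n by rewrite card_imset // card_ord.
rewrite -[X in (X <= _)%N]card_orbit.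
have D'_nr := counter_cover_no_reversed_edge D_nr.
apply: (leq_trans _ (edge_class_card_le_index counter_cover_ok t' D'_nr ab)).
by apply/subset_leq_card/subsetP => _ /imsetP[i _ ->]; rewrite inE (orbit i).1.
Qed.

End CounterCover.

Theorem proposition3p9 (T : finType) (D : gluing T) :
  triangulated_ideal_3manifold D ->
  exists (T' : finType) (D' : gluing T') (p : T' -> T),
    [/\ triangulated_ideal_3manifold D',
        simplicial_branched_cover D' D p &
        forall (t' : T') (a b : 'I_4), a != b -> 6 <= edge_index D' t' a b].
Proof.
case=> D_ok [o D_or] D_nr.
exists (T * sheet 6 T)%type, (counter_cover 6 D o), fst; split.
- split; [exact: counter_cover_ok | exact: counter_cover_orientable |].
  exact: counter_cover_no_reversed_edge.
- exact: counter_cover_branched.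
- by move=> t' a b; apply: counter_cover_edge_index.
Qed.
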